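(* For all $\rho^{0},\rho^{1},\theta^{0},\theta^{1}>0$, \[ s(\rho^1,\theta^1)-s(\rho^0,\theta^0)\;\ge\;\frac{1}{\theta^1}\big(e(\rho^1,\theta^1)-e(\rho^0,\theta^0)\big)-\frac{1}{\rho^0\,\theta^1}\,\frac{p(\rho^1,\theta^1)}{\rho^1}\,\big(\rho^1-\rho^0\big). \]
   Context: Subscripts denote partial derivatives. Let $P\in C^3((0,\infty)^2)$, $P=P(\rho,\theta)$, and $Q\in C^2((0,\infty))$, $Q=Q(\theta)$, satisfy for all $\rho,\theta>0$: $P_\rho\ge0$, $(\rho P_\rho)_\rho\ge0$, $Q_\theta-\theta P_{\theta\theta}\ge\underline c_v$ for some constant $\underline c_v>0$. Define the pressure $p=\rho^2P_\rho$, the specific internal energy $e=P-\theta P_\theta+Q$, and the specific entropy $s(\rho,\theta)=\int_1^\theta\frac{Q_\theta(t)}{t}dt-P_\theta(\rho,\theta)$. *)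

From Stdlib Require Import Reals Lra ClassicalEpsilon.
Open Scope R_scope.

Definition cont_quad (f : R -> R -> R) : Prop :=
  forall x y, 0 < x -> 0 < y -> forall eps, 0 < eps ->
    exists del, 0 < del /\ forall x' y', 0 < x' -> 0 < y' ->
      Rabs (x' - x) < del -> Rabs (y' - y) < del ->
      Rabs (f x' y' - f x y) < eps.

Fixpoint Ck_quad (k : nat) (f : R -> R -> R) : Prop :=
  cont_quad f /\
  match k with
  | O => True
  | S k' => exists f1 f2 : R -> R -> R,
      (forall x y, 0 < x -> 0 < y ->
         derivable_pt_lim (fun r => f r y) x (f1 x y) /\
         derivable_pt_lim (fun t => f x t) y (f2 x y)) /\
      Ck_quad k' f1 /\ Ck_quad k' f2
  end.

Definition cont_pos (f : R -> R) : Prop :=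
  forall x, 0 < x -> forall eps, 0 < eps ->
    exists del, 0 < del /\ forall x', 0 < x' -> Rabs (x' - x) < del ->
      Rabs (f x' - f x) < eps.

Fixpoint Ck_pos (k : nat) (f : R -> R) : Prop :=
  cont_pos f /\
  match k with
  | O => True
  | S k' => exists f1 : R -> R,
      (forall x, 0 < x -> derivable_pt_lim f x (f1 x)) /\ Ck_pos k' f1
  end.

(* Riemann integral \int_a^b f (signed, Stdlib convention); well defined by
   proof irrelevance of RiemannInt whenever f is Riemann integrable. *)
Definition Rint (f : R -> R) (a b : R) : R :=
  epsilon (inhabits 0)
    (fun v => exists pr : Riemann_integrable f a b, RiemannInt pr = v).

(* Pressure p = rho^2 P_rho, internal energy e = P - theta P_theta + Q,
   entropy s = \int_1^theta Q_theta(t)/t dt - P_theta. *)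
Definition pressure (Pr : R -> R -> R) (rho th : R) : R := rho ^ 2 * Pr rho th.
Definition energy (P Pt : R -> R -> R) (Q : R -> R) (rho th : R) : R :=
  P rho th - th * Pt rho th + Q th.
Definition entropy (Pt : R -> R -> R) (Qt : R -> R) (rho th : R) : R :=
  Rint (fun t => Qt t / t) 1 th - Pt rho th.

(** The inequality splits along the path (rho0, th0) -> (rho0, th1) -> (rho1, th1).
    Along the isochore, t |-> th1 s(rho0, t) - e(rho0, t) has derivative
    (th1 - t) (Q_theta - t P_tt) / t, which changes sign at t = th1 because
    Q_theta - t P_tt >= c_v > 0; so it is maximal at th1.  Along the isotherm,
    th1 (s1 - s0) - (e1 - e0) = P(rho0, th1) - P(rho1, th1), and since r P_rho(r, th1)
    is nondecreasing, r |-> a ln r - P(r, th1) with a = rho1 P_rho(rho1, th1) is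
    maximal at rho1; finally ln(rho1 / rho0) <= rho1 / rho0 - 1 and a >= 0. *)

From Stdlib Require Import Reals Lra ClassicalEpsilon.
From Coquelicot Require Import Coquelicot.
Open Scope R_scope.

Lemma locally_pos (x : R) : 0 < x -> locally x (fun t => 0 < t).
Proof.
  intros Hx. exists (mkposreal x Hx). intros t Ht.
  unfold ball in Ht; simpl in Ht; unfold AbsRing_ball, abs, minus, plus, opp in Ht; simpl in Ht.
  apply Rabs_lt_between in Ht. lra.
Qed.

Lemma derivable_pt_lim_ext_pos (f g : R -> R) x l : 0 < x ->
  (forall t, 0 < t -> f t = g t) ->
  derivable_pt_lim f x l -> derivable_pt_lim g x l.
Proof.
  intros Hx He Hd. apply is_derive_Reals. apply is_derive_Reals in Hd.
  apply (is_derive_ext_loc f g); [|exact Hd].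
  eapply filter_imp; [|apply (locally_pos x Hx)]. intros t Ht; auto.
Qed.

Lemma derivable_pt_lim_eq f x l l' :
  derivable_pt_lim f x l -> l = l' -> derivable_pt_lim f x l'.
Proof. intros H ->; exact H. Qed.

Lemma ln_le_sub1 x : 0 < x -> ln x <= x - 1.
Proof.
  intros Hx. destruct (Req_dec x 1) as [->|Hn].
  - rewrite ln_1; lra.
  - assert (Hexp := exp_ineq1 (x - 1) ltac:(lra)).
    assert (Hln : ln x < ln (exp (x - 1))) by (apply ln_increasing; lra).
    rewrite ln_exp in Hln. lra.
Qed.

Lemma Ck_quad_S k f : Ck_quad (S k) f -> Ck_quad k f.
Proof.
  revert f; induction k as [|k IH]; intros f [Hc Hd].
  - now split.
  - destruct Hd as [f1 [f2 [Hd [H1 H2]]]].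
    split; [exact Hc|]. exists f1, f2. auto.
Qed.

Lemma Rint_RInt (F : R -> R) a b : ex_RInt F a b -> Rint F a b = RInt F a b.
Proof.
  intros He. unfold Rint.
  destruct (epsilon_spec (inhabits 0)
    (fun v => exists pr : Riemann_integrable F a b, RiemannInt pr = v))
    as [pr Hpr].
  { exists (RiemannInt (ex_RInt_Reals_0 _ _ _ He)). eauto. }
  rewrite <- Hpr. symmetry. apply RInt_Reals.
Qed.

Lemma derivable_pt_lim_Rint (F : R -> R) x :
  (forall t, 0 < t -> continuous F t) -> 0 < x ->
  derivable_pt_lim (fun t => Rint F 1 t) x (F x).
Proof.
  intros Hc Hx.
  assert (Hex : forall b, 0 < b -> ex_RInt F 1 b).
  { intros b Hb. apply (@ex_RInt_continuous R_CompleteNormedModule).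
    intros z Hz. apply Hc.
    assert (0 < Rmin 1 b) by (apply Rmin_glb_lt; lra). lra. }
  apply (derivable_pt_lim_ext_pos (fun t => RInt F 1 t)); auto.
  { intros t Ht. symmetry. apply Rint_RInt. auto. }
  apply is_derive_Reals. apply is_derive_RInt with (a := 1); [|auto].
  eapply filter_imp; [|apply (locally_pos x Hx)]. intros t Ht.
  apply (@RInt_correct R_CompleteNormedModule). auto.
Qed.

Section DerivativeOnPositiveReals.

Variables f f' : R -> R.
Hypothesis Hf : forall c, 0 < c -> derivable_pt_lim f c (f' c).

Lemma nondecreasing_pos_of_deriv_ge0 :
  (forall c, 0 < c -> 0 <= f' c) -> forall x y, 0 < x -> x <= y -> f x <= f y.
Proof.
  intros Hpos x y Hx [Hxy|<-]; [|lra].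
  destruct (MVT_cor2 f f' x y Hxy) as [c [Hfc Hc]].
  { intros c Hc. apply Hf. lra. }
  assert (0 <= f' c * (y - x)) by (apply Rmult_le_pos; [apply Hpos|]; lra).
  lra.
Qed.

Lemma le_max_pos_of_deriv_sign m : 0 < m ->
  (forall c, 0 < c -> 0 <= (m - c) * f' c) -> forall x, 0 < x -> f x <= f m.
Proof.
  intros Hm Hsign x Hx.
  destruct (Rtotal_order x m) as [Hxm|[->|Hmx]]; [|lra|].
  - destruct (MVT_cor2 f f' x m Hxm) as [c [Hfc Hc]].
    { intros c Hc. apply Hf. lra. }
    assert (Hs := Hsign c ltac:(lra)). nra.
  - destruct (MVT_cor2 f f' m x Hmx) as [c [Hfc Hc]].
    { intros c Hc. apply Hf. lra. }
    assert (Hs := Hsign c ltac:(lra)).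
    nra.
Qed.

End DerivativeOnPositiveReals.

Lemma isochoric_energy_le (S p pt ptt q qt : R -> R) th0 th1 :
  (forall t, 0 < t -> derivable_pt_lim S t (qt t / t)) ->
  (forall t, 0 < t -> derivable_pt_lim p t (pt t)) ->
  (forall t, 0 < t -> derivable_pt_lim pt t (ptt t)) ->
  (forall t, 0 < t -> derivable_pt_lim q t (qt t)) ->
  (forall t, 0 < t -> 0 <= qt t - t * ptt t) ->
  0 < th0 -> 0 < th1 ->
  (p th1 - th1 * pt th1 + q th1) - (p th0 - th0 * pt th0 + q th0)
    <= th1 * ((S th1 - pt th1) - (S th0 - pt th0)).
Proof.
  intros HS Hp Hpt Hq Hcv Ht0 Ht1.
  set (g := fun t => th1 * (S t - pt t) - (p t - t * pt t + q t)).
  assert (Hg : forall c, 0 < c ->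
            derivable_pt_lim g c ((th1 - c) / c * (qt c - c * ptt c))).
  { intros c Hc. unfold g. eapply derivable_pt_lim_eq.
    - apply derivable_pt_lim_minus.
      + apply derivable_pt_lim_mult; [apply derivable_pt_lim_const|].
        apply derivable_pt_lim_minus; auto.
      + apply derivable_pt_lim_plus; auto.
        apply derivable_pt_lim_minus; auto.
        apply derivable_pt_lim_mult; [apply derivable_pt_lim_id|auto].
    - simpl. field. lra. }
  assert (Hmax : g th0 <= g th1).
  { apply (le_max_pos_of_deriv_sign g _ Hg); auto.
    intros c Hc.
    replace ((th1 - c) * ((th1 - c) / c * (qt c - c * ptt c)))
      with ((th1 - c) ^ 2 * / c * (qt c - c * ptt c)) by (field; lra).
    apply Rmult_le_pos; [apply Rmult_le_pos|auto].
    - apply pow2_ge_0.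
    - left. apply Rinv_0_lt_compat. lra. }
  unfold g in Hmax. lra.
Qed.

Lemma isothermal_increment_le (p pr : R -> R) rho0 rho1 :
  (forall r, 0 < r -> derivable_pt_lim p r (pr r)) ->
  (forall u v, 0 < u -> u <= v -> u * pr u <= v * pr v) ->
  0 <= pr rho1 -> 0 < rho0 -> 0 < rho1 ->
  p rho1 - p rho0 <= rho1 * pr rho1 * (rho1 / rho0 - 1).
Proof.
  intros Hp Hmono Hpr1 Hr0 Hr1.
  set (a := rho1 * pr rho1).
  assert (Ha : 0 <= a) by (apply Rmult_le_pos; lra).
  set (phi := fun r => a * ln r - p r).
  assert (Hphi : forall c, 0 < c -> derivable_pt_lim phi c ((a - c * pr c) / c)).
  { intros c Hc. unfold phi. eapply derivable_pt_lim_eq.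
    - apply derivable_pt_lim_minus; auto.
      apply derivable_pt_lim_mult; [apply derivable_pt_lim_const|].
      apply derivable_pt_lim_ln; auto.
    - simpl. field. lra. }
  assert (Hmax : phi rho0 <= phi rho1).
  { apply (le_max_pos_of_deriv_sign phi _ Hphi); auto.
    intros c Hc.
    replace ((rho1 - c) * ((a - c * pr c) / c))
      with ((rho1 - c) * (a - c * pr c) * / c) by (field; lra).
    apply Rmult_le_pos; [|left; apply Rinv_0_lt_compat; lra].
    destruct (Rle_lt_dec c rho1) as [Hc1|Hc1].
    - apply Rmult_le_pos; [lra|]. assert (Hm := Hmono c rho1 Hc Hc1). unfold a. lra.
    - assert (Hm := Hmono rho1 c Hr1 (Rlt_le _ _ Hc1)). unfold a in *. nra. }
  assert (Hln : ln rho1 - ln rho0 <= rho1 / rho0 - 1).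
  { rewrite <- ln_div by auto. apply ln_le_sub1. apply Rdiv_lt_0_compat; auto. }
  unfold phi in Hmax. fold a.
  assert (a * (ln rho1 - ln rho0) <= a * (rho1 / rho0 - 1)) by (apply Rmult_le_compat_l; auto).
  lra.
Qed.

Lemma continuous_deriv_div_id (Q Qt : R -> R) :
  Ck_pos 2 Q -> (forall t, 0 < t -> derivable_pt_lim Q t (Qt t)) ->
  forall t, 0 < t -> continuous (fun u => Qt u / u) t.
Proof.
  intros [_ [q1 [Hq1 [_ [q2 [Hq2 _]]]]]] HQt t Ht.
  assert (Heq : forall u, 0 < u -> Qt u = q1 u).
  { intros u Hu. eapply uniqueness_limite; eauto. }
  apply (continuous_ext_loc _ (fun u => q1 u * / u)).
  { eapply filter_imp; [|apply (locally_pos t Ht)]. intros u Hu. simpl.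
    unfold Rdiv. rewrite Heq; auto. }
  apply (continuous_mult q1 (fun u => / u)).
  - apply (@ex_derive_continuous R_AbsRing R_NormedModule).
    exists (q2 t). apply is_derive_Reals. auto.
  - apply continuous_Rinv. lra.
Qed.

Lemma mul_partial_nondecreasing (P Pr : R -> R -> R) th :
  Ck_quad 2 P ->
  (forall rho, 0 < rho -> derivable_pt_lim (fun r => P r th) rho (Pr rho th)) ->
  (forall rho l, 0 < rho ->
     derivable_pt_lim (fun r => r * Pr r th) rho l -> 0 <= l) ->
  0 < th -> forall u v, 0 < u -> u <= v -> u * Pr u th <= v * Pr v th.
Proof.
  intros [_ [f1 [f2 [Hd [[_ [g1 [g2 [Hd1 _]]]] _]]]]] HPr Hmono Hth.
  assert (HPrf : forall r, 0 < r -> Pr r th = f1 r th).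
  { intros r Hr. eapply uniqueness_limite; [apply HPr; auto|apply Hd; auto]. }
  assert (Hpsi : forall c, 0 < c ->
            derivable_pt_lim (fun r => r * Pr r th) c (f1 c th + c * g1 c th)).
  { intros c Hc.
    apply (derivable_pt_lim_ext_pos (fun r => r * f1 r th)); auto.
    { intros r Hr. rewrite HPrf; auto. }
    eapply derivable_pt_lim_eq.
    - apply derivable_pt_lim_mult; [apply derivable_pt_lim_id|apply Hd1; auto].
    - unfold id; ring. }
  apply (nondecreasing_pos_of_deriv_ge0 _ _ Hpsi).
  intros c Hc. apply (Hmono c); auto.
Qed.

Theorem mainTheorem8
  (P : R -> R -> R) (Q : R -> R)
  (Pr Pt Ptt : R -> R -> R) (Qt : R -> R) (cv : R)
  (HP : Ck_quad 3 P) (HQ : Ck_pos 2 Q)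
  (HPr : forall rho th, 0 < rho -> 0 < th ->
           derivable_pt_lim (fun r => P r th) rho (Pr rho th))
  (HPt : forall rho th, 0 < rho -> 0 < th ->
           derivable_pt_lim (fun t => P rho t) th (Pt rho th))
  (HPtt : forall rho th, 0 < rho -> 0 < th ->
           derivable_pt_lim (fun t => Pt rho t) th (Ptt rho th))
  (HQt : forall th, 0 < th -> derivable_pt_lim Q th (Qt th))
  (Hcv : 0 < cv)
  (H1 : forall rho th, 0 < rho -> 0 < th -> 0 <= Pr rho th)
  (H2 : forall rho th l, 0 < rho -> 0 < th ->
          derivable_pt_lim (fun r => r * Pr r th) rho l -> 0 <= l)
  (H3 : forall rho th, 0 < rho -> 0 < th -> cv <= Qt th - th * Ptt rho th)
  (rho0 rho1 th0 th1 : R)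
  (Hr0 : 0 < rho0) (Hr1 : 0 < rho1) (Ht0 : 0 < th0) (Ht1 : 0 < th1) :
  entropy Pt Qt rho1 th1 - entropy Pt Qt rho0 th0 >=
    / th1 * (energy P Pt Q rho1 th1 - energy P Pt Q rho0 th0)
    - / (rho0 * th1) * (pressure Pr rho1 th1 / rho1) * (rho1 - rho0).
Proof.
  pose proof (continuous_deriv_div_id Q Qt HQ HQt) as HF.
  assert (Hth := isochoric_energy_le (fun t => Rint (fun u => Qt u / u) 1 t)
    (P rho0) (Pt rho0) (Ptt rho0) Q Qt th0 th1
    (fun t Ht => derivable_pt_lim_Rint _ t HF Ht)
    (fun t => HPt rho0 t Hr0) (fun t => HPtt rho0 t Hr0) HQt
    (fun t Ht => Rle_trans _ _ _ (Rlt_le _ _ Hcv) (H3 rho0 t Hr0 Ht)) Ht0 Ht1).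
  assert (Hrho := isothermal_increment_le (fun r => P r th1) (fun r => Pr r th1)
    rho0 rho1 (fun r Hr => HPr r th1 Hr Ht1)
    (mul_partial_nondecreasing P Pr th1 (Ck_quad_S 2 P HP)
       (fun r Hr => HPr r th1 Hr Ht1) (fun r l Hr => H2 r th1 l Hr Ht1) Ht1)
    (H1 rho1 th1 Hr1 Ht1) Hr0 Hr1).
  simpl in Hth, Hrho. unfold entropy, energy, pressure.
  apply Rle_ge. apply Rmult_le_reg_l with th1; [exact Ht1|].
  replace (th1 * (/ th1 * (P rho1 th1 - th1 * Pt rho1 th1 + Q th1
                         - (P rho0 th0 - th0 * Pt rho0 th0 + Q th0))
                 - / (rho0 * th1) * (rho1 ^ 2 * Pr rho1 th1 / rho1) * (rho1 - rho0)))
    with (P rho1 th1 - th1 * Pt rho1 th1 + Q th1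
          - (P rho0 th0 - th0 * Pt rho0 th0 + Q th0)
          - rho1 * Pr rho1 th1 * (rho1 / rho0 - 1)) by (field; lra).
  lra.
Qed.
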